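(* Fix $b\in\mathbb{N}$. A given $b$-pattern $P$ is realizable in $L=\mathbb{N}\times\mathbb{N}$ if and only if, for every prime $p$, the set of circles of $P$ does not contain a complete rectangle modulo $(p,p^b)$.
   Context: $\mathbb{N}=\{1,2,3,\dots\}$, $L=\mathbb{N}\times\mathbb{N}$. For $r,s\in\mathbb{N}$, $\gcd_b(r,s)=\max\{k\in\mathbb{N} : k\mid r \text{ and } k^b\mid s\}$; a point $(r,s)\in L$ is $b$-visible if $\gcd_b(r,s)=1$ and $b$-invisible otherwise. A $b$-pattern $P$ is obtained by choosing a positive integer $w$ and assigning to each $(r,s)\in L$ with $1\le r\le w$, $1\le s\le w^b$ either a cross, a circle, or neither. $P$ is realizable in $L$ if there is $(u,v)\in L$ such that $(u+r,v+s)$ is $b$-visible for every circle $(r,s)$ of $P$ and $(u+r,v+s)$ is $b$-invisible for every cross $(r,s)$ of $P$. For a positive integer $m$, a complete rectangle modulo $(m,m^b)$ is a collection of $m^{b+1}$ points of $L$ containing a complete system of residues of $\mathbb{Z}/m\mathbb{Z}\times\mathbb{Z}/m^b\mathbb{Z}$ (i.e. whose images under $(x,y)\mapsto(x \bmod m, y\bmod m^b)$ are all of $\mathbb{Z}/m\mathbb{Z}\times\mathbb{Z}/m^b\mathbb{Z}$). *)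

From mathcomp Require Import all_boot.
Set Implicit Arguments. Unset Strict Implicit. Unset Printing Implicit Defensive.

(* Points of L = N x N with N = {1,2,3,...} are pairs of positive naturals. *)

(* gcd_b(r,s) = max { k in N : k | r and k^b | s }.  For r >= 1 every such k
   satisfies k <= r, and k = 0 never divides r > 0, so the max ranges over k <= r. *)
Definition gcdb (b r s : nat) : nat :=
  \max_(k < r.+1 | (k %| r) && (k ^ b %| s)) k.

Definition b_visible (b r s : nat) : bool := gcdb b r s == 1.
Definition b_invisible (b r s : nat) : bool := ~~ b_visible b r s.

Inductive mark := Cross | Circle | Blank.
Definition mark_eqb (x y : mark) : bool :=
  match x, y with
  | Cross, Cross | Circle, Circle | Blank, Blank => true
  | _, _ => false end.

(* A b-pattern of width w is an assignment P : nat -> nat -> mark; only the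
   values at (r,s) with 1 <= r <= w, 1 <= s <= w^b are relevant. *)
Definition in_box (b w r s : nat) : Prop :=
  1 <= r <= w /\ 1 <= s <= w ^ b.

Definition is_circle (b w : nat) (P : nat -> nat -> mark) (r s : nat) : Prop :=
  in_box b w r s /\ P r s = Circle.

Definition is_cross (b w : nat) (P : nat -> nat -> mark) (r s : nat) : Prop :=
  in_box b w r s /\ P r s = Cross.

Definition realizable (b w : nat) (P : nat -> nat -> mark) : Prop :=
  exists u v : nat, 1 <= u /\ 1 <= v /\
    (forall r s, is_circle b w P r s -> b_visible b (u + r) (v + s)) /\
    (forall r s, is_cross b w P r s -> b_invisible b (u + r) (v + s)).

Definition complete_rectangle (b m : nat) (S : seq (nat * nat)) : Prop :=
  [/\ uniq S, size S = m ^ b.+1,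
      (forall x, x \in S -> 1 <= x.1 /\ 1 <= x.2) &
      (forall i j, i < m -> j < m ^ b ->
         exists2 x, x \in S & (x.1 %% m = i) /\ (x.2 %% m ^ b = j))].

Definition circles_contain_complete_rectangle (b w : nat)
    (P : nat -> nat -> mark) (m : nat) : Prop :=
  exists S : seq (nat * nat), complete_rectangle b m S /\
    (forall x, x \in S -> is_circle b w P x.1 x.2).

From mathcomp Require Import all_boot.
Set Implicit Arguments. Unset Strict Implicit. Unset Printing Implicit Defensive.

(* Necessity: a complete rectangle of circles modulo (p, p^b) contains a point
   congruent to (-u, -v), and that point is b-invisible.
   Sufficiency: by the Chinese remainder theorem choose u, and then v, such that
   - for every prime p <= w, (u, v) = -(i, j) modulo (p, p^b), where (i, j) is a
     residue missed by the circles;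
   - every cross x gets its own prime q_x > w with (u, v) = -x modulo (q_x, q_x^b),
     which makes it invisible;
   - v = 0 modulo p^b for every other prime p > w dividing some u + r, r <= w.
   No prime p can then witness the invisibility of a circle (r, s): for p <= w the
   circle would hit the missed residue, for p = q_x both r, s and x lie below
   (q_x, q_x^b) so (r, s) = x is a cross, and otherwise p^b would divide
   0 < s <= w^b < p^b. *)

Lemma leq_gcdb b r s k : 0 < r -> k %| r -> k ^ b %| s -> k <= gcdb b r s.
Proof.
move=> r_gt0 kr ks; have k_lt : k < r.+1 by rewrite ltnS dvdn_leq.
by apply: (leq_bigmax_cond (Ordinal k_lt)); rewrite /= kr ks.
Qed.

Lemma b_visibleP b r s : 0 < r ->
  reflect (forall p, prime p -> p %| r -> ~~ (p ^ b %| s)) (b_visible b r s).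
Proof.
move=> r_gt0; apply: (iffP eqP) => [gcd1 p p_pr pr|noP].
  apply/negP => ps; have := leq_gcdb r_gt0 pr ps.
  by rewrite gcd1 leqNgt prime_gt1.
apply/eqP; rewrite eqn_leq leq_gcdb ?dvd1n ?exp1n ?dvd1n // andbT.
apply/bigmax_leqP => k /andP[kr ks]; rewrite leqNgt; apply/negP => k_gt1.
have := noP _ (pdiv_prime k_gt1) (dvdn_trans (pdiv_dvd k) kr).
by rewrite (dvdn_trans (dvdn_exp2r b (pdiv_dvd k)) ks).
Qed.

Lemma eqn_mod_dvdn_add m z a c : m %| z + a -> (m %| z + c) = (c == a %[mod m]).
Proof. by rewrite /dvdn => /eqP za; rewrite -(eqn_modDl z) za. Qed.

Lemma dvdn_add_submod m a : 0 < m -> m %| a + (m - a %% m).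
Proof.
by move=> m_gt0; rewrite /dvdn -modnDml subnKC ?modnn // ltnW ?ltn_pmod.
Qed.

Lemma chinese_seq (l : seq (nat * nat)) :
  all (fun x => 0 < x.1) l -> pairwise coprime (unzip1 l) ->
  exists2 z, 0 < z & forall x, x \in l -> z = x.2 %[mod x.1].
Proof.
elim: l => [|[m a] l IHl] /=; first by exists 1.
case/andP=> m_gt0 l_gt0 /andP[m_cop l_cop].
have [z0 _ z0_mod] := IHl l_gt0 l_cop.
set M := \prod_(x <- l) x.1.
have M_gt0 : 0 < M by rewrite /M big_seq prodn_cond_gt0 // => x /(allP l_gt0).
have mM_cop : coprime m M.
  rewrite /M big_seq; apply: (big_ind (coprime m)) => [|n k|x xl].
  - exact: coprimen1.
  - by rewrite coprimeMr => -> ->.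
  - exact: (allP m_cop) (map_f _ xl).
exists (chinese m M a z0 + m * M); first by rewrite addn_gt0 muln_gt0 m_gt0 M_gt0 orbT.
move=> x; rewrite inE => /predU1P[->|xl] /=.
  by rewrite -modnDmr modnMr addn0 chinese_modl.
have xM : x.1 %| M by rewrite /M (big_rem x xl) dvdn_mulr.
rewrite -modnDmr (eqP (dvdn_mull m xM)) addn0.
by rewrite -(modn_dvdm _ xM) chinese_modr // (modn_dvdm _ xM) z0_mod.
Qed.

Lemma chinese_seq_dvdn (l : seq (nat * nat)) :
  all (fun x => 0 < x.1) l -> pairwise coprime (unzip1 l) ->
  exists2 z, 0 < z & forall x, x \in l -> x.1 %| z + x.2.
Proof.
move=> l_gt0 l_cop.
have [z z_gt0 z_mod] := chinese_seq (l := [seq (x.1, x.1 - x.2 %% x.1) | x <- l])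
  ltac:(by rewrite all_map) ltac:(by rewrite /unzip1 -map_comp).
exists z => // x xl; have x_gt0 := allP l_gt0 x xl.
by rewrite addnC (eqn_mod_dvdn_add _ (dvdn_add_submod _ x_gt0)) (z_mod _ (map_f _ xl)).
Qed.

Lemma chinese_prime_powers e (l : seq (nat * nat)) :
  all prime (unzip1 l) -> uniq (unzip1 l) ->
  exists2 z, 0 < z & forall x, x \in l -> x.1 ^ e %| z + x.2.
Proof.
move=> l_pr l_uniq; set l' := [seq (x.1 ^ e, x.2) | x <- l].
have l'_gt0 : all (fun x => 0 < x.1) l'.
  rewrite all_map; apply/allP => x xl /=.
  by rewrite expn_gt0 prime_gt0 // (allP l_pr) ?map_f.
have l'_cop : pairwise coprime (unzip1 l').
  rewrite /unzip1 -map_comp pairwise_map.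
  move: l_uniq; rewrite uniq_pairwise pairwise_map.
  apply: (@sub_in_pairwise _ (fun x : nat * nat => prime x.1)); last by rewrite -all_map.
  by move=> x y /= xp yp xy; rewrite coprimeXl ?coprimeXr // prime_coprime ?dvdn_prime2.
have [z z_gt0 z_dvd] := chinese_seq_dvdn l'_gt0 l'_cop.
by exists z => // x xl; exact: (z_dvd _ (map_f _ xl)).
Qed.

Lemma complete_rectangle_invisible b p u v S : prime p -> complete_rectangle b p S ->
  exists2 x, x \in S & b_invisible b (u + x.1) (v + x.2).
Proof.
move=> p_pr [_ _ S_pos S_cover]; have p_gt0 := prime_gt0 p_pr.
have pb_gt0 : 0 < p ^ b by rewrite expn_gt0 p_gt0.
have [x xS [x1 x2]] := S_cover _ _ (ltn_pmod (p - u %% p) p_gt0)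
                                   (ltn_pmod (p ^ b - v %% p ^ b) pb_gt0).
have pu : p %| u + x.1.
  by rewrite (eqn_mod_dvdn_add _ (dvdn_add_submod u p_gt0)) x1.
have pv : p ^ b %| v + x.2.
  by rewrite (eqn_mod_dvdn_add _ (dvdn_add_submod v pb_gt0)) x2.
exists x => //; have [x1_gt0 _] := S_pos x xS.
by apply/negP => /(b_visibleP _ _ (ltn_addl u x1_gt0))/(_ p p_pr pu); rewrite pv.
Qed.

Definition box b w : seq (nat * nat) :=
  [seq (r, s) | r <- iota 1 w, s <- iota 1 (w ^ b)].

Definition marked b w (P : nat -> nat -> mark) (m : mark) :=
  [seq x <- box b w | mark_eqb (P x.1 x.2) m].

Lemma mark_eqbP x y : reflect (x = y) (mark_eqb x y).
Proof. by case: x; case: y; constructor. Qed.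

Lemma mem_box b w x : (x \in box b w) = (1 <= x.1 <= w) && (1 <= x.2 <= w ^ b).
Proof.
case: x => r s; apply/allpairsP/andP => [[[r' s'] /= [+ + [-> ->]]] | [? ?]].
  by rewrite !mem_iota !add1n !ltnS.
by exists (r, s); rewrite /= !mem_iota !add1n !ltnS.
Qed.

Lemma mem_marked b w P m x :
  x \in marked b w P m <-> in_box b w x.1 x.2 /\ P x.1 x.2 = m.
Proof.
rewrite mem_filter mem_box /in_box.
by split=> [/andP[/mark_eqbP -> /andP[-> ->]] | [[-> ->] /mark_eqbP ->]].
Qed.

Lemma marked_uniq b w P m : uniq (marked b w P m).
Proof.
by rewrite filter_uniq // allpairs_uniq ?iota_uniq // => -[? ?] [? ?] _ _ [-> ->].
Qed.

Definition residue b m (x : nat * nat) := (x.1 %% m, x.2 %% m ^ b).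

Definition residues b m : seq (nat * nat) :=
  [seq (i, j) | i <- iota 0 m, j <- iota 0 (m ^ b)].

Lemma mem_residues b m ij : (ij \in residues b m) = (ij.1 < m) && (ij.2 < m ^ b).
Proof.
case: ij => i j; apply/allpairsP/andP => [[[i' j'] /= [+ + [-> ->]]] | [? ?]].
  by rewrite !mem_iota.
by exists (i, j); rewrite /= !mem_iota.
Qed.

Lemma residue_id b m ij : ij \in residues b m -> residue b m ij = ij.
Proof.
by case: ij => i j; rewrite mem_residues => /andP[? ?]; rewrite /residue !modn_small.
Qed.

Lemma complete_rectangle_of_cover b m (C : seq (nat * nat)) :
  (forall x, x \in C -> 1 <= x.1 /\ 1 <= x.2) ->
  {subset residues b m <= map (residue b m) C} ->
  exists2 S, complete_rectangle b m S & {subset S <= C}.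
Proof.
move=> C_pos cover; pose pre ij := nth (0, 0) C (index ij (map (residue b m) C)).
have pre_idx ij : ij \in residues b m -> index ij (map (residue b m) C) < size C.
  by move/cover; rewrite -index_mem size_map.
have pre_in ij : ij \in residues b m -> pre ij \in C by move/pre_idx; exact: mem_nth.
have res_pre ij : ij \in residues b m -> residue b m (pre ij) = ij.
  by move=> ijR; rewrite -(nth_map _ (0, 0)) ?pre_idx ?nth_index ?cover.
exists (map pre (residues b m)); last by move=> _ /mapP[ij ijR ->]; exact: pre_in.
split.
- rewrite map_inj_in_uniq ?allpairs_uniq ?iota_uniq //.
    by move=> -[? ?] [? ?] _ _ [-> ->].
  by move=> ij ij' ijR ij'R eq_pre; rewrite -(res_pre _ ijR) -(res_pre _ ij'R) eq_pre.
- by rewrite size_map size_allpairs !size_iota expnS.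
- by move=> _ /mapP[ij ijR ->]; exact/C_pos/pre_in.
- move=> i j i_lt j_lt.
  have ijR : (i, j) \in residues b m by rewrite mem_residues /= i_lt.
  by exists (pre (i, j)); [exact: map_f | case: (res_pre _ ijR)].
Qed.

Definition missing_residue b m C : nat * nat :=
  nth (0, 0) (residues b m) (find [predC map (residue b m) C] (residues b m)).

Lemma missing_residueP b m C :
  (forall x, x \in C -> 1 <= x.1 /\ 1 <= x.2) ->
  ~ (exists2 S, complete_rectangle b m S & {subset S <= C}) ->
  residue b m (missing_residue b m C) \notin map (residue b m) C.
Proof.
move=> C_pos no_rect.
have miss : has [predC map (residue b m) C] (residues b m).
  rewrite has_predC; apply/negP => /allP cover.
  exact/no_rect/complete_rectangle_of_cover.
by rewrite residue_id ?mem_nth -?has_find //; exact: (nth_find _ miss).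
Qed.

Lemma exists_primes_above w n :
  exists s : seq nat, [/\ size s = n, uniq s & all (fun p => prime p && (w < p)) s].
Proof.
elim: n => [|n [s [s_size s_uniq s_pr]]]; first by exists [::].
have [p p_gt p_pr] := prime_above (w + \max_(k <- s) k).
exists (p :: s); rewrite /= s_size s_uniq s_pr p_pr (leq_ltn_trans (leq_addr _ w) p_gt).
split=> //; rewrite andbT; apply/negP => ps.
have := leq_ltn_trans (leq_addl w _) p_gt.
by rewrite ltnNge (leq_bigmax_seq _ ps isT).
Qed.

Lemma exists_prime_labelling (T : eqType) (X : seq T) w :
  exists q : T -> nat,
    {in X &, injective q} /\ {in X, forall x, prime (q x) && (w < q x)}.
Proof.
have [s [s_size s_uniq s_pr]] := exists_primes_above w (size X).
exists (fun x => nth 0 s (index x X)); split=> [x y xX yX /eqP|x xX].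
  rewrite nth_uniq ?s_size ?index_mem // => /eqP eq_idx.
  by rewrite -(nth_index x xX) eq_idx nth_index.
by apply: (allP s_pr); rewrite mem_nth // s_size index_mem.
Qed.

Section Construction.

Variables (b w : nat) (P : nat -> nat -> mark).
Hypothesis b_gt0 : 0 < b.

Let circles := marked b w P Circle.
Let crosses := marked b w P Cross.

Variable a : nat -> nat * nat.
Hypothesis a_missing : forall p, prime p -> p <= w ->
  residue b p (a p) \notin map (residue b p) circles.

Variable q : nat * nat -> nat.
Hypothesis q_inj : {in crosses &, injective q}.
Hypothesis q_prime : {in crosses, forall x, prime (q x) && (w < q x)}.

Section Visibility.

Variables u v : nat.
Hypothesis u_small : forall p, prime p -> p <= w -> p %| u + (a p).1.
Hypothesis u_cross : {in crosses, forall x, q x %| u + x.1}.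
Hypothesis v_small : forall p, prime p -> p <= w -> p ^ b %| v + (a p).2.
Hypothesis v_cross : {in crosses, forall x, q x ^ b %| v + x.2}.
Hypothesis v_large : forall p r, prime p -> w < p -> p \notin map q crosses ->
  1 <= r <= w -> p %| u + r -> p ^ b %| v.

Lemma circle_visible r s : is_circle b w P r s -> b_visible b (u + r) (v + s).
Proof.
move=> circ; have [[/andP[r_gt0 rw] /andP[s_gt0 sw]] Pc] := circ.
apply/(b_visibleP _ _ (ltn_addl u r_gt0)) => p p_pr pr; apply/negP => ps.
have [pw | wp] := leqP p w.
  apply: (negP (a_missing p_pr pw)); apply/mapP; exists (r, s); first exact/mem_marked.
  rewrite /residue /=; congr pair; apply/eqP; rewrite eq_sym.
    by rewrite -(eqn_mod_dvdn_add _ (u_small p_pr pw)).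
  by rewrite -(eqn_mod_dvdn_add _ (v_small p_pr pw)).
have wpb : w ^ b < p ^ b by rewrite ltn_exp2r.
have [/mapP[x xX def_p] | pQ] := boolP (p \in map q crosses).
  have [[/andP[_ x1w] /andP[_ x2w]] Px] := (mem_marked _ _ _ _ _).1 xX.
  rewrite def_p in pr ps wp wpb.
  move: pr; rewrite (eqn_mod_dvdn_add _ (u_cross xX)).
  rewrite !modn_small ?(leq_ltn_trans _ wp) // => /eqP rx.
  move: ps; rewrite (eqn_mod_dvdn_add _ (v_cross xX)).
  rewrite !modn_small ?(leq_ltn_trans _ wpb) // => /eqP sx.
  by move: Pc; rewrite rx sx Px.
have /(dvdn_leq s_gt0) : p ^ b %| s.
  by rewrite -(dvdn_addr _ (v_large p_pr wp pQ _ pr)) ?r_gt0.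
by rewrite leqNgt (leq_ltn_trans sw wpb).
Qed.

Lemma cross_invisible r s : is_cross b w P r s -> b_invisible b (u + r) (v + s).
Proof.
move=> cross; have [[/andP[r_gt0 _] _] _] := cross.
have xX : (r, s) \in crosses by exact/mem_marked.
have /andP[q_pr _] := q_prime xX.
apply/negP => /(b_visibleP _ _ (ltn_addl u r_gt0))/(_ _ q_pr (u_cross xX)).
by rewrite (v_cross xX).
Qed.

End Visibility.

Let small := [seq p <- iota 0 w.+1 | prime p].

Lemma mem_small p : (p \in small) = prime p && (p <= w).
Proof. by rewrite mem_filter mem_iota ltnS. Qed.

Lemma small_cat_primes (s : seq nat) :
  all (fun p => prime p && (w < p)) s -> uniq s ->
  all prime (small ++ s) && uniq (small ++ s).
Proof.
move=> s_large s_uniq.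
rewrite all_cat filter_all cat_uniq s_uniq filter_uniq ?iota_uniq //=.
rewrite andbT; apply/andP; split.
  by apply/allP => p /(allP s_large) /andP[].
apply/hasPn => p /(allP s_large) /andP[_ wp].
by rewrite mem_small negb_and -ltnNge wp orbT.
Qed.

Lemma crosses_primes :
  all (fun p => prime p && (w < p)) (map q crosses) && uniq (map q crosses).
Proof.
rewrite map_inj_in_uniq ?marked_uniq // andbT.
by apply/allP => _ /mapP[x xX ->]; exact: q_prime.
Qed.

Lemma exists_u : exists2 u, 0 < u &
  (forall p, prime p -> p <= w -> p %| u + (a p).1) /\
  {in crosses, forall x, q x %| u + x.1}.
Proof.
set l := [seq (p, (a p).1) | p <- small] ++ [seq (q x, x.1) | x <- crosses].
have l_fst : unzip1 l = small ++ map q crosses.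
  by rewrite /unzip1 map_cat -!map_comp map_id.
have /andP[q_large q_uniq] := crosses_primes.
have /andP[l_pr l_uniq] := small_cat_primes q_large q_uniq.
rewrite -l_fst in l_pr l_uniq.
have [u u_gt0 u_dvd] := chinese_prime_powers 1 l_pr l_uniq.
exists u => //; split=> [p p_pr pw | x xX].
  have := u_dvd (p, (a p).1); rewrite expn1; apply.
  by rewrite mem_cat map_f ?mem_small ?p_pr.
have := u_dvd (q x, x.1); rewrite expn1; apply.
by rewrite mem_cat (map_f (fun x => (q x, x.1))) ?orbT.
Qed.

Lemma exists_v u : exists2 v, 0 < v &
  [/\ forall p, prime p -> p <= w -> p ^ b %| v + (a p).2,
      {in crosses, forall x, q x ^ b %| v + x.2} &
      forall p r, prime p -> w < p -> p \notin map q crosses ->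
        1 <= r <= w -> p %| u + r -> p ^ b %| v].
Proof.
set N := \prod_(r <- iota 1 w) (u + r).
have N_gt0 : 0 < N.
  rewrite /N big_seq prodn_cond_gt0 // => r.
  by rewrite mem_iota => /andP[/(ltn_addl u)].
set large := [seq p <- primes N | (w < p) && (p \notin map q crosses)].
set l := [seq (p, (a p).2) | p <- small] ++ [seq (q x, x.2) | x <- crosses] ++
         [seq (p, 0) | p <- large].
have l_fst : unzip1 l = small ++ (map q crosses ++ large).
  by rewrite /unzip1 !map_cat -!map_comp !map_id.
have /andP[q_large q_uniq] := crosses_primes.
have qL_large : all (fun p => prime p && (w < p)) (map q crosses ++ large).
  rewrite all_cat q_large; apply/allP => p.
  by rewrite mem_filter mem_primes => /andP[/andP[-> _] /and3P[-> _ _]].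
have qL_uniq : uniq (map q crosses ++ large).
  rewrite cat_uniq q_uniq filter_uniq ?primes_uniq // andbT.
  by apply/hasPn => p; rewrite mem_filter => /andP[/andP[]].
have /andP[l_pr l_uniq] := small_cat_primes qL_large qL_uniq.
rewrite -l_fst in l_pr l_uniq.
have [v v_gt0 v_dvd] := chinese_prime_powers b l_pr l_uniq.
exists v => //; split=> [p p_pr pw | x xX | p r p_pr wp pQ /andP[r_gt0 rw] pr].
- by apply: (v_dvd (p, (a p).2)); rewrite mem_cat map_f ?mem_small ?p_pr.
- apply: (v_dvd (q x, x.2)).
  by rewrite !mem_cat (map_f (fun x => (q x, x.2))) ?orbT.
- rewrite -[v]addn0; apply: (v_dvd (p, 0)); rewrite !mem_cat map_f ?orbT //.
  rewrite mem_filter wp pQ mem_primes p_pr N_gt0 (dvdn_trans pr) //.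
  by rewrite /N (big_rem r) ?dvdn_mulr // mem_iota r_gt0 add1n ltnS.
Qed.

Lemma realizable_of_missing_residues : realizable b w P.
Proof.
have [u u_gt0 [u_small u_cross]] := exists_u.
have [v v_gt0 [v_small v_cross v_large]] := exists_v u.
exists u, v; do 2!split=> //; split.
- exact: circle_visible.
- exact: cross_invisible.
Qed.

End Construction.

Theorem mainTheorem4 (b : nat) (hb : 1 <= b) (w : nat) (hw : 1 <= w)
    (P : nat -> nat -> mark) :
  realizable b w P <->
  (forall p : nat, prime p -> ~ circles_contain_complete_rectangle b w P p).
Proof.
split=> [[u [v [_ [_ [vis _]]]]] p p_pr [S [rect S_circ]] | no_rect].
  have [x xS] := complete_rectangle_invisible u v p_pr rect.
  by rewrite /b_invisible (vis _ _ (S_circ x xS)).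
have circ_pos x : x \in marked b w P Circle -> 1 <= x.1 /\ 1 <= x.2.
  by case/mem_marked => -[/andP[? _] /andP[? _]].
have [q [q_inj q_prime]] := exists_prime_labelling (marked b w P Cross) w.
apply: (realizable_of_missing_residues
         (a := fun p => missing_residue b p (marked b w P Circle)) hb _ q_inj q_prime).
move=> p p_pr _.
apply: missing_residueP circ_pos _ => -[S rect S_circ].
by apply: (no_rect p p_pr); exists S; split=> // x /S_circ /mem_marked.
Qed.
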